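(* Let $n=2k$ with $k\in\mathbb N$, and let $a\in\mathbb R$, $a\neq0$. Then $|T_n(i/a)|\ge \frac12\left(\frac1a+1\right)^n$, where $T_n$ is the Tchebyshev polynomial of the first kind of degree $n$.
   Context: $T_n(x)=\frac12\left((x+\sqrt{x^2-1})^n+(x-\sqrt{x^2-1})^n\right)$, the Tchebyshev polynomial of the first kind of degree $n$. *)

From HB Require Import structures.
From mathcomp Require Import all_boot all_order all_algebra.
From mathcomp Require Import complex.
Set Implicit Arguments. Unset Strict Implicit. Unset Printing Implicit Defensive.
Import Order.TTheory GRing.Theory Num.Theory.
Local Open Scope ring_scope.

(* Chebyshev polynomial of the first kind, via the paper's closed formula
   T_n(x) = ((x + sqrt(x^2-1))^n + (x - sqrt(x^2-1))^n) / 2, on complex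
   arguments (the choice of square root branch is irrelevant). *)
Definition chebT (R : rcfType) (n : nat) (x : R[i]) : R[i] :=
  ((x + sqrtc (x ^+ 2 - 1)) ^+ n + (x - sqrtc (x ^+ 2 - 1)) ^+ n) / 2%:R.

From HB Require Import structures.
From mathcomp Require Import all_boot all_order all_algebra.
From mathcomp Require Import complex.
Import Order.TTheory GRing.Theory Num.Theory.
Local Open Scope ring_scope.

(* For [x = i c], [x^2 - 1 = -(c^2 + 1)] has the square root [i m] with
   [m = sqrt (c^2 + 1)], and the closed formula does not see the branch, so
   [T_2k(i c) = (-1)^k ((c + m)^2k + (c - m)^2k) / 2].  Its modulus is at least
   [(|c| + m)^2k / 2], and [|c| + m >= |c| + 1 >= |c + 1|]. *)

Lemma chebTE (R : rcfType) (n : nat) (x s : R[i]) :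
  s ^+ 2 = x ^+ 2 - 1 -> chebT n x = ((x + s) ^+ n + (x - s) ^+ n) / 2%:R.
Proof.
move=> s2; rewrite /chebT.
have /eqP : sqrtc (x ^+ 2 - 1) ^+ 2 = s ^+ 2 by rewrite sqr_sqrtc s2.
by rewrite eqf_sqr => /orP[] /eqP ->; rewrite ?opprK // addrC.
Qed.

Lemma exprn_even_imag (R : rcfType) (k : nat) (y : R) :
  ('i%C * (y%:C)%C) ^+ (2 * k) = ((-1) ^+ k * y ^+ (2 * k))%:C%C.
Proof. by rewrite exprMn !exprM sqr_i rmorphM !rmorphXn rmorphN1. Qed.

Lemma chebT_even_imag (R : rcfType) (k : nat) (c : R) :
  let m := Num.sqrt (c ^+ 2 + 1) in
  `|chebT (2 * k) ('i%C * (c%:C)%C)|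
    = (((c + m) ^+ (2 * k) + (c - m) ^+ (2 * k)) / 2%:R)%:C%C.
Proof.
move=> m; have sqrD1_ge0 : 0 <= c ^+ 2 + 1 by rewrite addr_ge0 ?sqr_ge0.
rewrite (@chebTE _ _ _ ('i%C * (m%:C)%C)); last first.
  by rewrite !exprMn sqr_i -!rmorphXn sqr_sqrtr // rmorphD rmorph1 !mulN1r opprD.
rewrite -mulrDr -mulrBr -!rmorphB -!rmorphD !exprn_even_imag -!rmorphD -!mulrDr.
rewrite -(rmorph_nat (real_complex R) 2) -fmorphV -rmorphM -mulrA rmorphM normrM.
rewrite rmorphXn rmorphN1 normrX normrN1 expr1n mul1r.
by rewrite ger0_norm // ler0c divr_ge0 ?addr_ge0 ?exprn_even_ge0 // oddM.
Qed.

Lemma sqrtr_sqrD1_ge1 (R : rcfType) (c : R) : 1 <= Num.sqrt (c ^+ 2 + 1).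
Proof. by rewrite -[X in X <= _]sqrtr1 ler_sqrt ?lerDr ?sqr_ge0 // addr_ge0 ?sqr_ge0. Qed.

Lemma exprn_norm_add_le (R : realDomainType) (n : nat) (c m : R) : 0 <= m ->
  (`|c| + m) ^+ n <= `|c + m| ^+ n + `|c - m| ^+ n.
Proof.
move=> m_ge0; have [c_ge0|c_lt0] := lerP 0 c.
  by rewrite ger0_norm // [`|c + m|]ger0_norm ?addr_ge0 // lerDl exprn_ge0.
rewrite ltr0_norm // [`|c - m|]ler0_norm; last by rewrite subr_le0 (le_trans (ltW c_lt0)).
by rewrite opprB addrC lerDr exprn_ge0.
Qed.

Lemma exprn_even_addr1_le (R : realDomainType) (k : nat) (c m : R) : 1 <= m ->
  (c + 1) ^+ (2 * k) <= (c + m) ^+ (2 * k) + (c - m) ^+ (2 * k).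
Proof.
move=> m_ge1; have m_ge0 : 0 <= m := le_trans ler01 m_ge1.
have even_norm (x : R) : x ^+ (2 * k) = `|x| ^+ (2 * k).
  by rewrite -normrX ger0_norm // exprn_even_ge0 // oddM.
rewrite (even_norm (c + 1)) (even_norm (c + m)) (even_norm (c - m)).
apply: le_trans _ (exprn_norm_add_le _ _ c m m_ge0).
apply: lerXn2r; rewrite ?nnegrE ?addr_ge0 //.
by apply: le_trans (ler_normD _ _) _; rewrite normr1 lerD2l.
Qed.

Theorem lemma1 (R : rcfType) (k : nat) (a : R) (ha : a != 0) :
  (((a^-1 + 1) ^+ (2 * k) / 2%:R)%:C)%C <= `|chebT (2 * k) ('i%C / (a%:C)%C)|.
Proof.
rewrite -fmorphV chebT_even_imag lecR; apply: ler_wpM2r; first by rewrite invr_ge0.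
exact/exprn_even_addr1_le/sqrtr_sqrD1_ge1.
Qed.
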